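(* Let $N\ge1$, $X=(x_1,\dots,x_N)$, $Y=(y_1,\dots,y_N)\in(\mathbb C\setminus\{0\})^N$ with $x_i\ne y_j$ for all $i,j$, and let $z\in\mathbb C\setminus\{1\}$. Then $$\sum_{a,b=1}^N(-1)^{a+b}y_b\det\Big[\frac{z}{x_i-y_j}\frac{y_j}{x_i}+\frac{1}{-x_i+y_j}\frac{x_i}{y_j}\Big]_{i\ne a,\,j\ne b}=(1-z)^{N-2}\Big(\hat H(X;Y)+z\prod_{i=1}^N\frac{y_i}{x_i}\hat H(Y;X)\Big)\det\Big[\frac{1}{y_j-x_i}\Big]_{i,j=1}^N.$$
   Context: $\det[\cdot]_{i\ne a,j\ne b}$ is the $(N-1)\times(N-1)$ determinant of the matrix with rows $i\in\{1,\dots,N\}\setminus\{a\}$ and columns $j\in\{1,\dots,N\}\setminus\{b\}$ in increasing order (equal to $1$ when $N=1$). For finite vectors $W=(\dots,w_i,\dots)$, $W'=(\dots,w'_{i'},\dots)$, $\hat H(W;W')=\frac12\big(\sum_iw_i-\sum_{i'}w'_{i'}\big)^2-\frac12\big(\sum_iw_i^2-\sum_{i'}(w'_{i'})^2\big)$. *)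

From HB Require Import structures.
From mathcomp Require Import all_boot all_order all_algebra.
From mathcomp Require Import complex.
Set Implicit Arguments. Unset Strict Implicit. Unset Printing Implicit Defensive.
Import Order.TTheory GRing.Theory Num.Theory.
Local Open Scope ring_scope.

Definition Hhat (F : fieldType) (n m : nat) (W : 'I_n -> F) (W' : 'I_m -> F) : F :=
  2^-1 * (\sum_(i < n) W i - \sum_(i < m) W' i) ^+ 2
  - 2^-1 * (\sum_(i < n) W i ^+ 2 - \sum_(i < m) W' i ^+ 2).

Definition minor_det (F : comRingType) (n : nat) (A : 'M[F]_n.+1) (a b : 'I_n.+1) : F :=
  \det (row' a (col' b A)).

From HB Require Import structures.
From mathcomp Require Import all_boot all_order all_algebra.
From mathcomp Require Import complex.
From mathcomp Require Import ring.
Set Implicit Arguments. Unset Strict Implicit. Unset Printing Implicit Defensive.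
Import Order.TTheory GRing.Theory Num.Theory.
Local Open Scope ring_scope.

(* Write M for the kernel matrix of the theorem, C = [1/(y_j - x_i)] for the
   Cauchy matrix, u = (1,...,1)^T and v = (y_1,...,y_N).

   1. By the cofactor expansion of a rank-one update,
        det (M + u v) = det M + sum_(a,b) u_a v_b cofactor M a b,
      so the left-hand side equals det (M + u v) - det M.
   2. Partial fractions give M + u (c(y_j))_j = (1-z) C + U V_c with the N x 2
      matrix U = [1/x_i, 1] and the 2 x N matrix V_c = [-z ; c(y_j) - 1/y_j];
      the cases c = 0 and c = id give M and M + u v.
   3. By det (1 + A B) = det (1 + B A), det ((1-z) C + U V) equals
      (1-z)^N det C det (1 + (1-z)^-1 V C^-1 U), a 2 x 2 determinant.
   4. The columns W of C^-1 U solve Cauchy systems; the moments sum_j W_j and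
      sum_j y_j W_j are read off the low coefficients of polynomial identities
      in the products prod_k (1 - a_k X), which vanish at the points 1/x_i.
   5. Expanding the two 2 x 2 determinants with these moments yields the
      right-hand side.  When x or y is not injective, every determinant
      involved has two equal rows or columns and both sides vanish. *)

Section Determinants.
Variable R : comPzRingType.

Lemma det_mx22 (A : 'M[R]_2) : \det A = A 0 0 * A 1 1 - A 0 1 * A 1 0.
Proof.
rewrite (expand_det_row _ 0) !big_ord_recr big_ord0 /= add0r /cofactor !det_mx11 !mxE /=.
rewrite expr0 expr1 mul1r mulN1r mulrN.
by congr (A _ _ * A _ _ - A _ _ * A _ _); apply/val_inj.
Qed.

(* Weinstein-Aronszajn: det (1 + AB) = det (1 + BA), from the two block
   triangular factorizations of [[1, A], [-B, 1]]. *)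
Lemma det_1_mul_comm m n (A : 'M[R]_(m, n)) (B : 'M[R]_(n, m)) :
  \det (1%:M + A *m B) = \det (1%:M + B *m A).
Proof.
have lower : block_mx 1%:M A (- B) 1%:M =
   block_mx 1%:M 0 (- B) 1%:M *m block_mx 1%:M A 0 (1%:M + B *m A).
  rewrite mulmx_block ?mul1mx ?mulmx1 ?mul0mx ?mulmx0 ?addr0 ?add0r.
  by rewrite mulNmx addrCA addNr addr0.
have upper : block_mx 1%:M A (- B) 1%:M =
   block_mx 1%:M A 0 1%:M *m block_mx (1%:M + A *m B) 0 (- B) 1%:M.
  rewrite mulmx_block ?mul1mx ?mulmx1 ?mul0mx ?mulmx0 ?addr0 ?add0r.
  by rewrite mulmxN addrK.
have := congr1 determinant lower; rewrite upper !det_mulmx det_lblock det_ublock.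
by rewrite det_ublock det_lblock !det1 !mul1r !mulr1 => ->.
Qed.

Variable n : nat.
Implicit Types (A : 'M[R]_n) (v : 'rV[R]_n) (c : 'cV[R]_n).

Definition row_set (i0 : 'I_n) v A : 'M[R]_n :=
  \matrix_(i, j) if i == i0 then v 0 j else A i j.

(* Laplace expansion along the replaced row: the cofactors of row i0 do not
   depend on that row. *)
Lemma det_row_set i0 v A : \det (row_set i0 v A) = \sum_j v 0 j * cofactor A i0 j.
Proof.
rewrite (expand_det_row _ i0); apply: eq_bigr => j _; rewrite !mxE eqxx.
rewrite /cofactor; do 3 f_equal; apply/matrixP => a b.
by rewrite !mxE eq_sym (negPf (neq_lift i0 a)).
Qed.

(* Adding multiples of the row v to the other rows does not change the
   determinant once row i0 equals v: the shear matrix 1 + c e_i0 has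
   determinant 1 + c_i0 = 1 by Weinstein-Aronszajn. *)
Lemma det_row_set_shear i0 v A c : c i0 0 = 0 ->
  \det (row_set i0 v (A + c *m v)) = \det (row_set i0 v A).
Proof.
move=> c0.
have -> : row_set i0 v (A + c *m v) = (1%:M + c *m delta_mx 0 i0) *m row_set i0 v A.
  rewrite mulmxDl mul1mx -mulmxA -rowE; apply/matrixP => i j.
  rewrite /row_set /row !mxE !big_ord1 !mxE eqxx.
  by case: eqP => [->|_]; rewrite ?c0 ?mul0r ?addr0.
by rewrite det_mulmx det_1_mul_comm -rowE det_mx11 !mxE c0 addr0 mul1r.
Qed.

Lemma det_row_update i0 a v A :
  \det (A + (a *: delta_mx i0 0) *m v) = \det A + a * \det (row_set i0 v A).
Proof.
rewrite -[\det A]mul1r; apply: (@determinant_multilinear _ _ _ _ _ i0).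
- apply/rowP => j; rewrite /row_set !mxE big_ord1 !mxE !eqxx.
  by rewrite mulr1 mul1r.
- apply/matrixP => i j; rewrite !mxE big_ord1 !mxE.
  by rewrite [lift _ _ == _]eq_sym (negPf (neq_lift i0 i)) mulr0 mul0r addr0.
- apply/matrixP => i j; rewrite /row_set !mxE big_ord1 !mxE.
  by rewrite ![lift _ _ == _]eq_sym (negPf (neq_lift i0 i)) mulr0 mul0r addr0.
Qed.

(* Cofactor form of the matrix determinant lemma, det (A + u v) =
   det A + v adj(A) u, proved by updating the rows one at a time: after k
   steps the truncation of u to its first k entries has been added. *)
Lemma det_rank_one A (u : 'cV[R]_n) v :
  \det (A + u *m v) = \det A + \sum_i \sum_j u i 0 * v 0 j * cofactor A i j.
Proof.
pose trunc k : 'cV[R]_n := \col_i (if (i < k)%N then u i 0 else 0).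
suff trunc_upd k : (k <= n)%N -> \det (A + trunc k *m v) =
    \det A + \sum_(i < n | (i < k)%N) u i 0 * \det (row_set i v A).
  have -> : u = trunc n by apply/colP => i; rewrite mxE ltn_ord.
  rewrite trunc_upd // big_mkcond; congr (_ + _); apply: eq_bigr => i _.
  by rewrite ltn_ord mxE ltn_ord det_row_set mulr_sumr; under eq_bigr do rewrite mulrA.
elim: k => [_|k IHk k_lt].
  have -> : trunc 0%N = 0 by apply/colP => i; rewrite !mxE.
  by rewrite mul0mx addr0 big_pred0 ?addr0.
pose k0 := Ordinal k_lt.
have -> : trunc k.+1 = trunc k + u k0 0 *: delta_mx k0 0.
  apply/colP => i; rewrite !mxE ltnS leq_eqVlt -val_eqE /=.
  case: ltngtP => [_|_|ik]; rewrite ?mulr0 ?addr0 ?add0r ?mulr1 //.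
  by congr (u _ 0); apply: val_inj.
rewrite mulmxDl addrA det_row_update det_row_set_shear ?mxE ?ltnn //.
rewrite IHk ?(ltnW k_lt) // -addrA; congr (_ + _).
rewrite [in RHS](bigD1 k0) ?ltnS //= addrC; congr (_ + _).
by apply: eq_bigl => i; rewrite ltnS -val_eqE /=; case: ltngtP.
Qed.

End Determinants.

Lemma det_scaled_low_rank (F : fieldType) n m (C : 'M[F]_n) (U : 'M[F]_(n, m))
    (V : 'M[F]_(m, n)) (t : F) : C \in unitmx -> t != 0 ->
  \det (t *: C + U *m V) =
  t ^+ n * \det C * \det (1%:M + (t^-1 *: V) *m (invmx C *m U)).
Proof.
move=> C_unit t_nz.
have -> : t *: C + U *m V = t *: (C *m (1%:M + (invmx C *m U) *m (t^-1 *: V))).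
  rewrite mulmxDr mulmx1 !mulmxA mulmxV // mul1mx scalerDr -scalemxAr scalerA.
  by rewrite mulfV // scale1r.
by rewrite detZ det_mulmx det_1_mul_comm mulrA.
Qed.

Lemma minor_sum_rank_one (R : comNzRingType) n (A : 'M[R]_n.+1) (y : 'I_n.+1 -> R) :
  \sum_(a < n.+1) \sum_(b < n.+1) (-1) ^+ (a + b) * y b * minor_det A a b
  = \det (A + const_mx 1 *m \row_j y j) - \det A.
Proof.
rewrite det_rank_one addrC addKr; apply: eq_bigr => a _; apply: eq_bigr => b _.
by rewrite !mxE /cofactor /minor_det; ring.
Qed.

Section ReversedProducts.
Variable F : fieldType.

Lemma coef_1subX_mul (c : F) (p : {poly F}) k :
  ((1 - c *: 'X) * p)`_k.+1 = p`_k.+1 - c * p`_k.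
Proof. by rewrite mulrBl mul1r -scalerAl coefB coefZ coefXM. Qed.

Lemma coef0_1subX_mul (c : F) (p : {poly F}) : ((1 - c *: 'X) * p)`_0 = p`_0.
Proof. by rewrite mulrBl mul1r -scalerAl coefB coefZ coefXM mulr0 subr0. Qed.

Lemma coef_prod_1subX (I : Type) (r : seq I) (P : pred I) (a : I -> F) :
  let p := \prod_(i <- r | P i) (1 - a i *: 'X) in
  let S := \sum_(i <- r | P i) a i in
  [/\ forall k, (count P r < k)%N -> p`_k = 0,
      p`_(count P r) = \prod_(i <- r | P i) - a i,
      p`_0 = 1, p`_1 = - S &
      2 * p`_2 = S ^+ 2 - \sum_(i <- r | P i) a i ^+ 2].
Proof.
elim: r => [|i r IH] /=.
  rewrite !big_nil !coef1 /= oppr0 expr0n mulr0 addr0.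
  by split => // -[|k]; rewrite coef1.
rewrite !big_cons; case: (P i) => //=.
case: IH => [high top c0 c1 c2]; split.
- case=> // k; rewrite ltnS => k_gt.
  by rewrite coef_1subX_mul !high ?mulr0 ?subr0 // ltnW.
- by rewrite coef_1subX_mul high ?leqnn // top sub0r mulNr.
- by rewrite coef0_1subX_mul.
- by rewrite coef_1subX_mul c0 c1; ring.
- by rewrite coef_1subX_mul mulrBr c2 mulrCA c1; ring.
Qed.

Lemma poly0_roots (p : {poly F}) (rs : seq F) :
  (size p <= size rs)%N -> uniq rs -> all (root p) rs -> p = 0.
Proof.
move=> size_p uniq_rs roots_rs; apply/eqP/negPn/negP => p_nz.
by have := max_poly_roots p_nz roots_rs uniq_rs; rewrite ltnNge size_p.
Qed.

Variable n : nat.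
Local Notation N := n.+1.
Implicit Types (a w : 'I_N -> F) (t : F).

(* rprod a = prod_k (1 - a_k X); rprod' a j omits the factor j; rsum a w is
   the combination whose value at t is rprod a (t) * sum_j w_j / (1 - a_j t). *)
Definition rprod a : {poly F} := \prod_k (1 - a k *: 'X).
Definition rprod' a j : {poly F} := \prod_(k | k != j) (1 - a k *: 'X).
Definition rsum a w : {poly F} := \sum_j w j *: rprod' a j.

Lemma coef_rprod a :
  [/\ forall k, (N < k)%N -> (rprod a)`_k = 0,
      (rprod a)`_N = \prod_k - a k,
      (rprod a)`_0 = 1,
      (rprod a)`_1 = - \sum_k a k &
      2 * (rprod a)`_2 = (\sum_k a k) ^+ 2 - \sum_k a k ^+ 2].
Proof.
have [high top c0 c1 c2] := coef_prod_1subX (index_enum 'I_N) predT a.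
have cnt : count predT (index_enum 'I_N) = N.
  by rewrite -sum1_count sum1_card card_ord.
by rewrite cnt in high top; split.
Qed.

Lemma coef_rsum a w :
  [/\ forall k, (N <= k)%N -> (rsum a w)`_k = 0,
      (rsum a w)`_0 = \sum_j w j &
      (rsum a w)`_1 = \sum_j a j * w j - (\sum_k a k) * \sum_j w j].
Proof.
have coef_rprod' j :
    [/\ forall k, (N <= k)%N -> (rprod' a j)`_k = 0,
        (rprod' a j)`_0 = 1 & (rprod' a j)`_1 = a j - \sum_k a k].
  have [high _ c0 c1 _] := coef_prod_1subX (index_enum 'I_N) (fun k => k != j) a.
  have cnt : count (fun k => k != j) (index_enum 'I_N) = n.
    by rewrite -sum1_count sum1_card cardC1 card_ord.
  rewrite cnt in high; split => //.
  by rewrite /rprod' c1 [\sum_k a k](bigD1 j) //=; ring.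
rewrite /rsum; split.
- move=> k k_ge; rewrite coef_sum big1 // => j _.
  by have [high _ _] := coef_rprod' j; rewrite coefZ high ?mulr0.
- rewrite coef_sum; apply: eq_bigr => j _.
  by have [_ c0 _] := coef_rprod' j; rewrite coefZ c0 mulr1.
- rewrite coef_sum mulr_sumr -sumrB; apply: eq_bigr => j _.
  by have [_ _ c1] := coef_rprod' j; rewrite coefZ c1; ring.
Qed.

Lemma horner_rprod a s : (rprod a).[s] = \prod_k (1 - a k * s).
Proof.
rewrite horner_prod; apply: eq_bigr => k _.
by rewrite hornerD hornerN hornerZ hornerX hornerC.
Qed.

Lemma horner_rprod' a j s : (rprod' a j).[s] = \prod_(k | k != j) (1 - a k * s).
Proof.
rewrite horner_prod; apply: eq_bigr => k _.
by rewrite hornerD hornerN hornerZ hornerX hornerC.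
Qed.

Lemma rprod_root a i : a i != 0 -> (rprod a).[(a i)^-1] = 0.
Proof. by move=> ai_nz; rewrite horner_rprod (bigD1 i) //= mulfV // subrr mul0r. Qed.

Lemma rsum_at_inv a w t : t != 0 -> (forall j, a j != t) ->
  (rsum a w).[t^-1] = - t * (rprod a).[t^-1] * \sum_j w j / (a j - t).
Proof.
move=> t_nz a_neq; rewrite horner_sum mulr_sumr; apply: eq_bigr => j _.
rewrite hornerZ horner_rprod (bigD1 j) //= horner_rprod'.
have : a j - t != 0 by rewrite subr_eq0.
by move=> ajt_nz; field; rewrite ajt_nz t_nz.
Qed.

(* At the node 1/a_i only the i-th summand of rsum survives, with a nonzero
   factor when the a_k are distinct. *)
Lemma rsum_node_eq0 a w i : injective a -> (forall k, a k != 0) ->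
  (rsum a w).[(a i)^-1] = 0 -> w i = 0.
Proof.
move=> a_inj a_nz.
have node_nz : (rprod' a i).[(a i)^-1] != 0.
  rewrite horner_rprod'; apply/prodf_neq0 => k k_neq.
  rewrite subr_eq0 -(mulfV (a_nz i)) (inj_eq (mulIf (invr_neq0 (a_nz i)))).
  by rewrite (inj_eq a_inj) eq_sym.
rewrite horner_sum (bigD1 i) //= big1 ?addr0 => [|j j_neq]; last first.
  by rewrite hornerZ horner_rprod' (bigD1 i) 1?eq_sym //= mulfV // subrr mul0r mulr0.
by rewrite hornerZ => /eqP; rewrite mulf_eq0 (negPf node_nz) orbF => /eqP.
Qed.

Lemma poly_eq0_inv_nodes (x : 'I_N -> F) (p : {poly F}) :
  injective x -> (size p <= N)%N -> (forall i, p.[(x i)^-1] = 0) -> p = 0.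
Proof.
move=> x_inj size_p roots; apply: (@poly0_roots p [seq (x i)^-1 | i <- enum 'I_N]).
- by rewrite size_map size_enum_ord.
- by rewrite map_inj_uniq ?enum_uniq // => i j /invr_inj /x_inj.
- by apply/allP => r /mapP[i _ ->]; rewrite /root roots.
Qed.

End ReversedProducts.

Section CauchySystems.
Variables (F : fieldType) (n : nat).
Local Notation N := n.+1.
Variables (x y : 'I_N -> F).
Hypotheses (x_inj : injective x) (x_nz : forall i, x i != 0).
Hypothesis xy_neq : forall i j, x i != y j.

Lemma rsum_at_inv_x (w : 'I_N -> F) i :
  (rsum y w).[(x i)^-1] = - x i * (rprod y).[(x i)^-1] * \sum_j w j / (y j - x i).
Proof. by apply: rsum_at_inv => // j; rewrite eq_sym. Qed.

(* For f = 1 the polynomial X rsum y w + rprod y - rprod x has degree <= N and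
   vanishes at 0 and at the 1/x_i, hence is zero; its coefficients of X and
   X^2 give the moments. *)
Lemma cauchy_moments_const (w : 'I_N -> F) :
  (2 : F) != 0 -> (forall i, \sum_j w j / (y j - x i) = 1) ->
  \sum_j w j = \sum_k y k - \sum_k x k /\ \sum_j y j * w j = Hhat x y.
Proof.
move=> two_nz sys; set G := 'X * rsum y w + rprod y - rprod x.
have [Sh S0 S1] := coef_rsum y w.
have [Yh _ Y0 Y1 Y2] := coef_rprod y; have [Xh _ X0 X1 X2] := coef_rprod x.
have G0 : G = 0.
  apply: (@poly0_roots _ _ (0 :: [seq (x i)^-1 | i <- enum 'I_N])).
  - rewrite /= size_map size_enum_ord; apply/leq_sizeP => -[//|k] k_gt.
    by rewrite !(coefB, coefD) coefXM /= Sh 1?Yh 1?Xh ?add0r ?subrr ?oppr0.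
  - rewrite /= map_inj_uniq ?enum_uniq ?andbT => [|i j /invr_inj /x_inj //].
    by apply/mapP => -[i _ /esym/eqP]; rewrite invr_eq0 (negPf (x_nz i)).
  - rewrite /= {1}/root horner_coef0 !(coefB, coefD) coefXM Y0 X0 add0r subrr eqxx /=.
    apply/allP => r /mapP[i _ ->].
    rewrite /root /G !hornerE rsum_at_inv_x sys rprod_root //.
    by rewrite mulr1 mulrA mulrN mulVf // mulN1r addNr subr0.
have coefG k : G`_k = ('X * rsum y w)`_k + (rprod y)`_k - (rprod x)`_k.
  by rewrite /G !(coefB, coefD).
have sum_w : \sum_j w j = \sum_k y k - \sum_k x k.
  have := coefG 1%N; rewrite G0 coef0 coefXM /= S0 Y1 X1 => eq1.
  by apply/eqP; rewrite -subr_eq0; apply/eqP; rewrite [RHS]eq1; ring.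
split => //.
have := congr1 (fun c => 2 * c) (coefG 2%N).
rewrite G0 coef0 mulr0 coefXM /= S1 !mulrBr mulrDr Y2 X2 sum_w => eq2.
apply: (mulfI two_nz); rewrite /Hhat mulrBr !mulrA mulfV // !mul1r.
by apply/eqP; rewrite -subr_eq0; apply/eqP; rewrite [RHS]eq2; ring.
Qed.

(* For f(t) = 1/t the polynomial rsum y w + rprod y - c rprod x vanishes at the
   1/x_i, and c = prod_i y_i/x_i kills its coefficient of X^N; its constant
   and linear coefficients give the moments. *)
Lemma cauchy_moments_inv (w : 'I_N -> F) :
  (forall i, \sum_j w j / (y j - x i) = (x i)^-1) ->
  let c := \prod_i (y i / x i) in
  \sum_j w j = c - 1 /\ \sum_j y j * w j = c * (\sum_k y k - \sum_k x k).
Proof.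
move=> sys c; set G := rsum y w + rprod y - c *: rprod x.
have [Sh S0 S1] := coef_rsum y w.
have [Yh Ytop Y0 Y1 _] := coef_rprod y; have [Xh Xtop X0 X1 _] := coef_rprod x.
have coefG k : G`_k = (rsum y w)`_k + (rprod y)`_k - c * (rprod x)`_k.
  by rewrite /G coefB coefD coefZ.
have G0 : G = 0.
  apply: (poly_eq0_inv_nodes x_inj); last first.
    move=> i; rewrite /G !hornerE rsum_at_inv_x sys rprod_root //.
    by rewrite !mulNr mulrAC mulfV // mul1r addNr mulr0 subr0.
  apply/leq_sizeP => k; rewrite leq_eqVlt => /orP[/eqP <-|k_gt]; last first.
    by rewrite coefG Sh ?Yh ?Xh ?(ltnW k_gt) // mulr0 addr0 subr0.
  rewrite coefG Sh // add0r Ytop Xtop /c -big_split /=; apply/eqP; rewrite subr_eq0; apply/eqP.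
  by apply: eq_bigr => i _; rewrite mulrN divfK.
have sum_w : \sum_j w j = c - 1.
  have := coefG 0%N; rewrite G0 coef0 S0 Y0 X0 mulr1 => eq0.
  by apply/eqP; rewrite -subr_eq0; apply/eqP; rewrite [RHS]eq0; ring.
split => //.
have := coefG 1%N; rewrite G0 coef0 S1 Y1 X1 sum_w => eq1.
by apply/eqP; rewrite -subr_eq0; apply/eqP; rewrite [RHS]eq1; ring.
Qed.

Definition cauchy_mx : 'M[F]_N := \matrix_(i, j) (1 / (y j - x i)).

Hypotheses (y_inj : injective y) (y_nz : forall j, y j != 0).

(* The Cauchy matrix is invertible: a left kernel vector v makes rsum x v
   vanish at the N points 1/y_j, hence everywhere, and then each v_i = 0. *)
Lemma cauchy_mx_unit : cauchy_mx \in unitmx.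
Proof.
rewrite unitmxE unitfE; apply/negP => /det0P[v v_nz v_ker].
have sums j : \sum_i v 0 i / (x i - y j) = 0.
  have := congr1 (fun A : 'rV[F]_N => A 0 j) v_ker; rewrite !mxE => ker_j.
  transitivity (- \sum_i v 0 i * (1 / (y j - x i))).
    rewrite -sumrN; apply: eq_bigr => i _.
    have : y j - x i != 0 by rewrite subr_eq0 eq_sym.
    by move=> yx_nz; field; rewrite yx_nz -opprB oppr_eq0.
  suff -> : \sum_i v 0 i * (1 / (y j - x i)) = 0 by rewrite oppr0.
  by rewrite -[RHS]ker_j; apply: eq_bigr => i _; rewrite mxE.
have T0 : rsum x (fun i => v 0 i) = 0.
  apply: (poly_eq0_inv_nodes y_inj) => [|j].
    by apply/leq_sizeP => k k_ge; have [Th _ _] := coef_rsum x (fun i => v 0 i); rewrite Th.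
  by rewrite rsum_at_inv // sums mulr0.
apply/negP: v_nz; rewrite negbK; apply/eqP/rowP => i; rewrite mxE.
by apply: (rsum_node_eq0 x_inj x_nz); rewrite T0 horner0.
Qed.

End CauchySystems.

Section MinorSumIdentity.
Variables (F : fieldType) (n : nat).
Local Notation N := n.+1.
Variables (x y : 'I_N -> F) (z : F).
Hypotheses (x_nz : forall i, x i != 0) (y_nz : forall j, y j != 0).
Hypothesis xy_neq : forall i j, x i != y j.

Definition kernel_mx : 'M[F]_N :=
  \matrix_(i, j) (z / (x i - y j) * (y j / x i) + 1 / (- x i + y j) * (x i / y j)).

Definition low_rank_left : 'M[F]_(N, 2) :=
  \matrix_(i, k) (if k == 0 then (x i)^-1 else 1).
Definition low_rank_right (e : F -> F) : 'M[F]_(2, N) :=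
  \matrix_(k, j) (if k == 0 then - z else e (y j)).

Lemma kernel_mx_update (c : F -> F) :
  kernel_mx + const_mx 1 *m \row_j c (y j) =
  (1 - z) *: cauchy_mx x y + low_rank_left *m low_rank_right (fun t => c t - t^-1).
Proof.
apply/matrixP => i j; rewrite !mxE !big_ord_recr !big_ord0 /= !mxE /= !add0r.
have xy_nz : x i - y j != 0 by rewrite subr_eq0.
have yx_nz : y j - x i != 0 by rewrite subr_eq0 eq_sym.
by field; rewrite x_nz y_nz xy_nz yx_nz.
Qed.

Lemma correction_mx_entry (e : F -> F) (W : 'M[F]_(N, 2)) k l :
  (1%:M + ((1 - z)^-1 *: low_rank_right e) *m W) k l =
  (k == l)%:R + (1 - z)^-1 * \sum_j (if k == 0 then - z else e (y j)) * W j l.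
Proof.
rewrite !mxE mulr_sumr; congr (_ + _); apply: eq_bigr => j _.
by rewrite !mxE mulrA.
Qed.

Hypotheses (two_nz : (2 : F) != 0) (z_ne1 : z != 1).

(* The identity for distinct x_i and distinct y_j: both determinants reduce
   to 2 x 2 determinants whose entries are the Cauchy moments of the columns
   of W = C^-1 U. *)
Lemma minor_sum_injective : injective x -> injective y ->
  \det (kernel_mx + const_mx 1 *m \row_j y j) - \det kernel_mx =
  (1 - z) ^ (N%:Z - 2) * (Hhat x y + z * (\prod_i (y i / x i)) * Hhat y x) *
  \det (cauchy_mx x y).
Proof.
move=> x_inj y_inj.
have t_nz : 1 - z != 0 by rewrite subr_eq0 eq_sym.
have C_unit : cauchy_mx x y \in unitmx by apply: cauchy_mx_unit.
have M_dec := kernel_mx_update (fun=> 0).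
rewrite (_ : \row_j 0 = 0) ?mulmx0 ?addr0 in M_dec; last by apply/rowP => j; rewrite !mxE.
rewrite (kernel_mx_update id) {}M_dec !det_scaled_low_rank //.
set W := invmx (cauchy_mx x y) *m low_rank_left.
have sysW l i : \sum_j W j l / (y j - x i) = low_rank_left i l.
  have : cauchy_mx x y *m W = low_rank_left by rewrite /W mulmxA mulmxV // mul1mx.
  move/matrixP/(_ i l) => <-; rewrite mxE; apply: eq_bigr => j _.
  by rewrite [cauchy_mx x y i j]mxE mulrC div1r.
have sys0 i : \sum_j W j 0 / (y j - x i) = (x i)^-1 by rewrite sysW mxE.
have sys1 i : \sum_j W j 1 / (y j - x i) = 1 by rewrite sysW mxE.
have [sum0 ysum0] := cauchy_moments_inv x_inj x_nz xy_neq sys0.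
have [sum1 ysum1] := cauchy_moments_const x_inj x_nz xy_neq two_nz sys1.
have split_row l : \sum_j (y j - (y j)^-1) * W j l =
    \sum_j y j * W j l - \sum_j (y j)^-1 * W j l.
  by rewrite -sumrB; apply: eq_bigr => j _; rewrite mulrBl.
have neg_row l : \sum_j (0 - (y j)^-1) * W j l = - \sum_j (y j)^-1 * W j l.
  by rewrite -sumrN; apply: eq_bigr => j _; rewrite sub0r mulNr.
have pow_N : (1 - z) ^+ N = (1 - z) ^ (N%:Z - 2) * (1 - z) ^+ 2.
  by rewrite !exprnP -expfzDr // subrK.
rewrite !det_mx22 !correction_mx_entry /= -!mulr_sumr !split_row !neg_row.
rewrite sum0 sum1 ysum0 ysum1 pow_N /Hhat.
by field; rewrite t_nz two_nz.
Qed.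

(* If two x_i (resp. y_j) coincide, all the matrices involved have two equal
   rows (resp. columns). *)
Lemma minor_sum_degenerate : ~~ (injectiveb x && injectiveb y) ->
  \det (kernel_mx + const_mx 1 *m \row_j y j) = 0 /\ \det kernel_mx = 0 /\
  \det (cauchy_mx x y) = 0.
Proof.
case/nandP => [/injectivePn[i1 [i2 i12 x12]] | /injectivePn[j1 [j2 j12 y12]]].
  have dup_rows (A : 'M[F]_N) : A i1 =1 A i2 -> \det A = 0.
    exact: determinant_alternate.
  by split; [|split]; apply: dup_rows => j; rewrite !mxE ?big_ord1 ?mxE x12.
have dup_cols (A : 'M[F]_N) : A^T j1 =1 A^T j2 -> \det A = 0.
  by move=> dup; rewrite -det_tr; apply: determinant_alternate dup.
by split; [|split]; apply: dup_cols => i; rewrite !mxE ?big_ord1 ?mxE y12.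
Qed.

End MinorSumIdentity.

Theorem minor_sum_identity (F : fieldType) (two_nz : (2 : F) != 0) (n : nat)
  (x y : 'I_n.+1 -> F) (z : F) (hx : forall i, x i != 0) (hy : forall j, y j != 0)
  (hxy : forall i j, x i != y j) (hz : z != 1) :
  \sum_(a < n.+1) \sum_(b < n.+1)
     (-1) ^+ (a + b) * y b *
     minor_det (\matrix_(i, j) (z / (x i - y j) * (y j / x i)
                                + 1 / (- x i + y j) * (x i / y j))) a b
  = (1 - z) ^ (n.+1%:Z - 2) *
    (Hhat x y + z * (\prod_(i < n.+1) (y i / x i)) * Hhat y x) *
    \det (\matrix_(i, j) (1 / (y j - x i))).
Proof.
rewrite minor_sum_rank_one.
have [/andP[/injectiveP x_inj /injectiveP y_inj] | degenerate] :=
  boolP (injectiveb x && injectiveb y).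
  exact: minor_sum_injective.
have [-> [-> ->]] := minor_sum_degenerate z degenerate.
by rewrite subrr mulr0.
Qed.

(* The complex numbers over a real closed field have characteristic 0. *)
Theorem mainTheorem12 (R : rcfType) (n : nat) (x y : 'I_n.+1 -> R[i]) (z : R[i])
  (hx : forall i, x i != 0) (hy : forall j, y j != 0)
  (hxy : forall i j, x i != y j) (hz : z != 1) :
  \sum_(a < n.+1) \sum_(b < n.+1)
     (-1) ^+ (a + b) * y b *
     minor_det (\matrix_(i, j) (z / (x i - y j) * (y j / x i)
                                + 1 / (- x i + y j) * (x i / y j))) a b
  = (1 - z) ^ (n.+1%:Z - 2) *
    (Hhat x y + z * (\prod_(i < n.+1) (y i / x i)) * Hhat y x) *
    \det (\matrix_(i, j) (1 / (y j - x i))).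
Proof. by apply: minor_sum_identity => //; rewrite pnatr_eq0. Qed.
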